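(* Let $Q$ be a quandle. (1) If $Q$ is right orderable, then for all $x,y\in Q$ with $S_y(x)\neq x$, the orbit of $x$ under the cyclic group $\langle S_y\rangle$ is infinite. (2) If $Q$ is left orderable, then $Q$ is semi-latin and, for all $x\neq y$ in $Q$, the set $\{L_y^n(x)\}_{n=0,1,\ldots}$ is infinite, where $L_y^0(x)=x$ and $L_y^{i+1}(x)=y*(L_y^i(x))$ for $i\ge 0$.
   Context: A quandle is a non-empty set $Q$ with a binary operation $*$ such that $x*x=x$ for all $x$; for all $x,y$ there is a unique $z$ with $x=z*y$; and $(x*y)*z=(x*z)*(y*z)$ for all $x,y,z$. For $y\in Q$, $S_y:Q\to Q$ is the bijection $S_y(x)=x*y$, and $L_y:Q\to Q$ is the map $L_y(x)=y*x$. $Q$ is right orderable if there is a linear order $<$ on $Q$ such that $x<y$ implies $x*z<y*z$ for all $x,y,z$; left orderable if there is a linear order $<$ such that $x<y$ implies $z*x<z*y$ for all $x,y,z$. $Q$ is semi-latin if each $L_x$ is injective. *)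

From Stdlib Require Import ZArith List.

Record quandle := Quandle {
  qcar :> Type;
  qop : qcar -> qcar -> qcar;
  q_inhabited : inhabited qcar;
  q_idem : forall x, qop x x = x;
  q_rdiv : forall x y, exists! z, x = qop z y;
  q_rdist : forall x y z, qop (qop x y) z = qop (qop x z) (qop y z)
}.

Definition S_ {Q : quandle} (y : Q) : Q -> Q := fun x => qop Q x y.
Definition L_ {Q : quandle} (y : Q) : Q -> Q := fun x => qop Q y x.

Definition strict_linear_order {T : Type} (lt : T -> T -> Prop) : Prop :=
  (forall x, ~ lt x x) /\
  (forall x y z, lt x y -> lt y z -> lt x z) /\
  (forall x y, lt x y \/ x = y \/ lt y x).

Definition right_orderable (Q : quandle) : Prop :=
  exists lt : Q -> Q -> Prop, strict_linear_order lt /\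
    forall x y z, lt x y -> lt (qop Q x z) (qop Q y z).

Definition left_orderable (Q : quandle) : Prop :=
  exists lt : Q -> Q -> Prop, strict_linear_order lt /\
    forall x y z, lt x y -> lt (qop Q z x) (qop Q z y).

Definition semi_latin (Q : quandle) : Prop :=
  forall x : Q, forall a b : Q, L_ x a = L_ x b -> a = b.

Definition finite_set {T : Type} (P : T -> Prop) : Prop :=
  exists l : list T, forall t, P t -> In t l.

(* f^n for a bijection f with inverse g, n : Z *)
Definition zpow {T : Type} (f g : T -> T) (n : Z) (x : T) : T :=
  match n with
  | Z0 => x
  | Zpos p => Nat.iter (Pos.to_nat p) f x
  | Zneg p => Nat.iter (Pos.to_nat p) g x
  end.

Definition is_inverse {T : Type} (f g : T -> T) : Prop :=
  (forall x, f (g x) = x) /\ (forall x, g (f x) = x).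

(* orbit of x under the cyclic group <S_y>: { S_y^n x | n in Z };
   g is any two-sided inverse of S_y (unique, since S_y is a bijection). *)
Definition S_orbit {Q : quandle} (y x : Q) (g : Q -> Q) : Q -> Prop :=
  fun t => exists n : Z, t = zpow (S_ y) g n x.

Definition L_forward_orbit {Q : quandle} (y x : Q) : Q -> Prop :=
  fun t => exists n : nat, t = Nat.iter n (L_ y) x.

From Stdlib Require Import ZArith List Lia FinFun.

(* An order-preserving self-map f moving x can never return x: the iterates
   f^n x are strictly monotone in n (increasing if x < f x, decreasing if
   f x < x), hence pairwise distinct, so no finite list contains them all.
   For right orders this applies to S_y.  For left orders it applies to L_y,
   which moves x whenever x <> y: y * x = x forces x * y = x = x * x by right
   distributivity and right cancellation, and left cancellation (semi-latinity,
   immediate from the strict monotonicity of L_x) then gives y = x. *)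

Lemma injective_seq_not_finite {T : Type} (h : nat -> T) (P : T -> Prop) :
  Injective h -> (forall n, P (h n)) -> ~ finite_set P.
Proof.
  intros h_inj hP [l l_full].
  set (s := map h (seq 0 (S (length l)))).
  assert (s_nodup : NoDup s).
  { apply Injective_map_NoDup; [exact h_inj | apply seq_NoDup]. }
  assert (s_incl : incl s l).
  { intros t Ht. apply in_map_iff in Ht as [n [<- _]]. apply l_full, hP. }
  pose proof (NoDup_incl_length s_nodup s_incl) as Hlen.
  unfold s in Hlen. rewrite length_map, length_seq in Hlen. lia.
Qed.

Section StrictOrder.

Variables (T : Type) (lt : T -> T -> Prop).
Hypothesis lt_irrefl : forall x, ~ lt x x.
Hypothesis lt_trans : forall x y z, lt x y -> lt y z -> lt x z.

Lemma increasing_seq_lt (h : nat -> T) :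
  (forall n, lt (h n) (h (S n))) -> forall n m, n < m -> lt (h n) (h m).
Proof.
  intros h_incr n m Hnm. induction Hnm as [|m _ IH].
  - apply h_incr.
  - exact (lt_trans _ _ _ IH (h_incr m)).
Qed.

Lemma increasing_seq_injective (h : nat -> T) :
  (forall n, lt (h n) (h (S n))) -> Injective h.
Proof.
  intros h_incr n m E.
  destruct (Nat.lt_trichotomy n m) as [Hnm | [Hnm | Hmn]]; [exfalso | exact Hnm | exfalso].
  - apply (lt_irrefl (h m)). rewrite <- E at 1. exact (increasing_seq_lt h h_incr n m Hnm).
  - apply (lt_irrefl (h n)). rewrite E at 1. exact (increasing_seq_lt h h_incr m n Hmn).
Qed.

End StrictOrder.

Lemma iter_injective_of_monotone {T : Type} (lt : T -> T -> Prop) (f : T -> T) (x : T) :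
  strict_linear_order lt -> (forall a b, lt a b -> lt (f a) (f b)) -> f x <> x ->
  Injective (fun n => Nat.iter n f x).
Proof.
  intros [lt_irrefl [lt_trans lt_total]] f_mono fx_neq.
  destruct (lt_total x (f x)) as [Hlt | [Heq | Hgt]].
  - apply (increasing_seq_injective T lt lt_irrefl lt_trans).
    intros n. induction n as [|n IH]; [exact Hlt | exact (f_mono _ _ IH)].
  - congruence.
  - apply (increasing_seq_injective T (fun a b => lt b a)).
    + exact lt_irrefl.
    + intros a b c Hab Hbc. exact (lt_trans _ _ _ Hbc Hab).
    + intros n. induction n as [|n IH]; [exact Hgt | exact (f_mono _ _ IH)].
Qed.

Lemma zpow_of_nat {T : Type} (f g : T -> T) (n : nat) (x : T) :
  zpow f g (Z.of_nat n) x = Nat.iter n f x.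
Proof.
  destruct n as [|n]; [reflexivity|].
  simpl. rewrite SuccNat2Pos.id_succ. reflexivity.
Qed.

Lemma qop_cancel_r (Q : quandle) (a b z : Q) : qop Q a z = qop Q b z -> a = b.
Proof.
  intros E. destruct (q_rdiv Q (qop Q b z) z) as [w [_ w_unique]].
  rewrite <- (w_unique a (eq_sym E)). exact (w_unique b eq_refl).
Qed.

Lemma L_fixed_S_fixed (Q : quandle) (x y : Q) : L_ y x = x -> S_ y x = x.
Proof.
  unfold L_, S_. intros E.
  apply (qop_cancel_r Q _ _ x).
  rewrite q_rdist, E, !q_idem. reflexivity.
Qed.

Lemma semi_latin_L_moves (Q : quandle) (x y : Q) :
  semi_latin Q -> x <> y -> L_ y x <> x.
Proof.
  intros Q_sl Hxy E. apply Hxy, (Q_sl x).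
  pose proof (L_fixed_S_fixed Q x y E) as Sx. unfold S_ in Sx. unfold L_.
  rewrite Sx. apply q_idem.
Qed.

Lemma left_orderable_semi_latin (Q : quandle) : left_orderable Q -> semi_latin Q.
Proof.
  intros [lt [[lt_irrefl [_ lt_total]] lt_mono]] z a b E. unfold L_ in E.
  destruct (lt_total a b) as [Hab | [Hab | Hba]]; [exfalso | exact Hab | exfalso].
  - apply (lt_irrefl (qop Q z b)). rewrite <- E at 1. exact (lt_mono _ _ z Hab).
  - apply (lt_irrefl (qop Q z a)). rewrite E at 1. exact (lt_mono _ _ z Hba).
Qed.

Theorem proposition3p7 (Q : quandle) :
  (right_orderable Q ->
     forall (x y : Q) (Sinv : Q -> Q), is_inverse (S_ y) Sinv ->
       S_ y x <> x -> ~ finite_set (S_orbit y x Sinv)) /\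
  (left_orderable Q ->
     semi_latin Q /\
     forall x y : Q, x <> y -> ~ finite_set (L_forward_orbit y x)).
Proof.
  split.
  - intros [lt [lt_order lt_mono]] x y Sinv _ Sx_moves.
    apply (injective_seq_not_finite (fun n => Nat.iter n (S_ y) x)).
    + apply (iter_injective_of_monotone lt); [exact lt_order | | exact Sx_moves].
      intros a b. apply lt_mono.
    + intros n. exists (Z.of_nat n). symmetry. apply zpow_of_nat.
  - intros Q_lo. pose proof (left_orderable_semi_latin Q Q_lo) as Q_sl.
    split; [exact Q_sl |].
    intros x y Hxy. destruct Q_lo as [lt [lt_order lt_mono]].
    apply (injective_seq_not_finite (fun n => Nat.iter n (L_ y) x)).
    + apply (iter_injective_of_monotone lt); [exact lt_order | | ].
      * intros a b. apply lt_mono.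
      * exact (semi_latin_L_moves Q x y Q_sl Hxy).
    + intros n. exists n. reflexivity.
Qed.
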